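(* Let $\nu\in\mathcal{P}(\Omega)$ be absolutely continuous, and for each $N\in\mathbb{N}^*$ let $(\mathcal{A},X)$ be a tagged partition of $\Omega$ associated with $\nu$, with $X=(x_1,\dots,x_N)$, and $\nu^E_X=\frac1N\sum_{i=1}^N\delta_{x_i}$. (1) For every function $f$ on $\Omega$ with compact support that is bounded and $\nu$-almost everywhere continuous, $\int_\Omega f\,d(\nu-\nu^E_X)=\int_\Omega f\,d\nu-\frac1N\sum_{i=1}^Nf(x_i)=o(1)$ as $N\to+\infty$. Consequently $\nu^E_X$ converges weakly to $\nu$, and $W_1(\nu^E_X,\nu)=o(1)$ as $N\to+\infty$ if moreover $\Omega$ has compact closure. (2) For every $\alpha\in(0,1]$, $N\in\mathbb{N}^*$ and every compactly supported $f\in\mathscr{C}^{0,\alpha}(\Omega)$, $\big|\int_\Omega f\,d\nu-\frac1N\sum_{i=1}^Nf(x_i)\big|\le\frac{C_\Omega^\alpha}{N^\alpha}\operatorname{Hol}_\alpha(f)$. In particular $W_1(\nu^E_X,\nu)\le\frac{C_\Omega}N$.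
   Context: $(\Omega,d_\Omega)$ is a complete metric space carrying a Lebesgue-type reference measure for absolute continuity. A tagged partition of $\Omega$ associated with $\nu$: disjoint subsets $\Omega_1,\dots,\Omega_N$ with union $\Omega$, $\nu(\Omega_i)=1/N$, $\mathrm{diam}(\Omega_i)\le C_\Omega/N$ for a constant $C_\Omega>0$ independent of $N$, and points $x_i\in\Omega_i$. $\operatorname{Hol}_\alpha(f)=\sup_{x\ne x'}|f(x)-f(x')|/d_\Omega(x,x')^\alpha$; $W_1$ is the 1-Wasserstein distance. *)

From HB Require Import structures.
From mathcomp Require Import all_boot all_order all_algebra.
From mathcomp Require Import all_classical all_reals all_analysis.

Set Implicit Arguments.
Unset Strict Implicit.
Unset Printing Implicit Defensive.

Import Order.TTheory GRing.Theory Num.Theory.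
Import numFieldNormedType.Exports.
Local Open Scope classical_set_scope.
Local Open Scope ring_scope.

(* complete metric spaces: a metric structure whose uniformity is complete
   (complete types are pointed, i.e. nonempty; Omega carries a probability
   measure, so it is nonempty anyway) *)
#[short(type="completeMetricType")]
HB.structure Definition CompleteMetric (K : numDomainType) :=
  { M of Metric K M & Complete M }.

Section Defs.
Context {R : realType}.

Definition borelT (T : completeMetricType R) := g_sigma_algebraType (@open T).

Definition tagged_partition (T : completeMetricType R) (nu : set (borelT T) -> \bar R)
    (C : R) (N : nat) (A : 'I_N -> set T) (X : 'I_N -> T) : Prop :=
  (forall i, @measurable _ (borelT T) (A i)) /\
  (forall i j, i <> j -> A i `&` A j = set0) /\
  (forall x, exists i, A i x) /\
  (forall i, nu (A i) = (N%:R^-1)%:E) /\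
  (forall i y z, A i y -> A i z -> @mdist R T y z <= C / N%:R) /\
  (forall i, A i (X i)).

Definition empirical (T : completeMetricType R) (N : nat) (X : 'I_N -> T)
    : set (borelT T) -> \bar R :=
  fun B => ((N%:R^-1)%:E * \sum_(i < N) \d_(X i : borelT T) B)%E.

Definition coupling (T : completeMetricType R) (mu nu : set (borelT T) -> \bar R)
    (P : probability (borelT T * borelT T)%type R) : Prop :=
  forall B : set (borelT T), measurable B ->
    P (B `*` setT) = mu B /\ P (setT `*` B) = nu B.

Definition W1 (T : completeMetricType R) (mu nu : set (borelT T) -> \bar R) : \bar R :=
  ereal_inf [set (\int[P]_z (@mdist R T z.1 z.2)%:E)%E | P in coupling mu nu].

(* Hoelder seminorm Hol_alpha(f) (possibly +oo); the supremum is taken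
   together with 0 so that it is 0 (not -oo) on a one-point space *)
Definition hol (T : completeMetricType R) (a : R) (f : T -> R) : \bar R :=
  ereal_sup [set e | e = 0%E \/ exists x y : T, x <> y /\
                 e = (`|f x - f y| / (@mdist R T x y) `^ a)%:E].

Definition compact_support (T : completeMetricType R) (f : T -> R) : Prop :=
  compact (closure [set x | f x != 0]).

End Defs.

Definition continuous_at_pt {R : realType} (T : completeMetricType R)
  (f : T -> R) (x : T) : Prop := {for x, continuous f}.

From HB Require Import structures.
From mathcomp Require Import all_boot all_order all_algebra.
From mathcomp Require Import all_classical all_reals all_analysis.
From mathcomp Require Import measurable_realfun.

Set Implicit Arguments.
Unset Strict Implicit.
Unset Printing Implicit Defensive.

Import Order.TTheory GRing.Theory Num.Theory.
Import numFieldNormedType.Exports.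
Local Open Scope classical_set_scope.
Local Open Scope ring_scope.

(* The step function [f_N] equal to [f (x_i)] on the cell [Omega_i] has
   [nu]-integral exactly [1/N sum_i f (x_i)], so the quadrature error is
   [int (f - f_N) dnu], at most the oscillation of [f] on sets of diameter
   [C/N]; for a Hoelder [f] this is [Hol_a(f) (C/N)^a].  Since [f_N --> f] at
   every continuity point of [f], dominated convergence gives (1).  Sending
   each point to the tag of its cell pushes [nu] forward to [nu^E_X] and moves
   no point further than [C/N], which bounds [W1].  For [N = 1] the partition
   hypothesis bounds the diameter of [Omega] by [C], so Hoelder functions are
   bounded, hence integrable. *)

Lemma bounded_integrable d (T : measurableType d) (R : realType)
    (P : probability T R) (f : T -> R) (M : R) :
  measurable_fun setT f -> (forall x, `|f x| <= M) ->
  P.-integrable setT (EFin \o f).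
Proof.
move=> mf fM; apply: measurable_bounded_integrable => //.
  exact: (le_lt_trans (probability_le1 P measurableT) (ltry 1)).
exists M; split; first exact: num_real.
by move=> r Mr x _; apply: le_trans (fM x) (ltW Mr).
Qed.

(* No measurability is needed (the transport cost [mdist z.1 z.2] need not be
   measurable for the product of Borel sigma-algebras): the integral of a
   nonnegative function is the supremum over the simple functions below it. *)
Lemma ge0_le_integral_nonmeasurable d (T : measurableType d) (R : realType)
    (mu : {measure set T -> \bar R}) (f g : T -> \bar R) :
  (forall x, 0 <= f x)%E -> (forall x, f x <= g x)%E ->
  (\int[mu]_x f x <= \int[mu]_x g x)%E.
Proof.
move=> f0 fg; have g0 x := le_trans (f0 x) (fg x).
rewrite !ge0_integralTE //.
apply: ge_ereal_sup => _ [h hf <-]; apply: ereal_sup_ubound; exists h => // x.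
exact: le_trans (hf x) (fg x).
Qed.

Lemma ge0_integral_le_ae d (T : measurableType d) (R : realType)
    (P : probability T R) (G : set T) (f : T -> \bar R) (c : R) :
  measurable G -> P (~` G) = 0%E -> (forall x, 0 <= f x)%E ->
  (forall x, G x -> f x <= c%:E)%E -> (\int[P]_x f x <= c%:E)%E.
Proof.
move=> mG PG0 f0 fc.
pose h x := if x \in G then c%:E else +oo%E.
apply: (@le_trans _ _ (\int[P]_x h x)%E).
  apply: ge0_le_integral_nonmeasurable => // x; rewrite /h.
  by case: ifPn => [/set_mem/fc|]; rewrite ?leey.
rewrite (ae_eq_integral (cst c%:E)) //.
- rewrite integral_cst // [X in (_ * X)%E](_ : _ = 1%E) ?mule1 //.
  exact: probability_setT.
- apply: measurable_fun_ifT => //; apply: (measurable_fun_bool true).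
  rewrite setTI (_ : _ @^-1` _ = G) //; apply/seteqP; split => x /= Gx.
  - exact: set_mem.
  - exact: mem_set.
- exists (~` G); split; [exact: measurableC|by []|].
  move=> x /= hx; apply: contrapT => Gx; apply: hx => _.
  by rewrite /h mem_set //; apply: contrapT.
Qed.

Section metric.
Context {R : realType} (T : completeMetricType R).

Lemma measurable_borel_set1 (y : T) : @measurable _ (borelT T) [set y].
Proof.
have /closed_openC oC : closed [set y].
  exact: accessible_closed_set1 (hausdorff_accessible (@metric_hausdorff R T)) y.
by rewrite -[[set y]]setCK; apply: measurableC; apply: sub_sigma_algebra.
Qed.

Lemma continuous_borel_measurable (f : T -> R) :
  continuous f -> @measurable_fun _ _ (borelT T) R setT f.
Proof.
move=> /continuousP cf; apply: (measurability _ (RGenOpens.measurableE R)).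
move=> _ [_ [a [b ->]] <-]; apply: measurableI => //.
by apply: sub_sigma_algebra; apply: cf; exact: interval_open.
Qed.

Lemma hol_ge0 (a : R) (f : T -> R) : (0 <= hol a f)%E.
Proof. by apply: ereal_sup_ubound; left. Qed.

Lemma hol_ub (a h : R) (f : T -> R) : hol a f = h%:E ->
  forall x y, `|f x - f y| <= h * mdist x y `^ a.
Proof.
move=> hh x y; have [->|xy] := eqVneq x y.
  by rewrite subrr normr0 mulr_ge0 ?powR_ge0 // -lee_fin -hh hol_ge0.
have dxy_gt0 : 0 < mdist x y `^ a by rewrite powR_gt0 // mdist_gt0.
rewrite -ler_pdivrMr // -lee_fin -hh.
by apply: ereal_sup_ubound; right; exists x, y; split => //; apply/eqP.
Qed.

Lemma hol_continuous (a h : R) (f : T -> R) : 0 < a -> hol a f = h%:E ->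
  continuous f.
Proof.
move=> a_gt0 hh x; apply/cvgrPdist_lt => e e_gt0.
have h_ge0 : 0 <= h by rewrite -lee_fin -hh hol_ge0.
have eh_gt0 : 0 < e / (h + 1) by rewrite divr_gt0 // ltr_wpDl.
pose r := (e / (h + 1)) `^ a^-1.
have r_gt0 : 0 < r by apply: powR_gt0.
have ra : r `^ a = e / (h + 1).
  by rewrite /r -powRrM mulVf ?gt_eqF // powRr1 // ltW.
apply/metricType_numDomainType.nbhs_mdistP; exists r => // y /= xy_lt.
apply: le_lt_trans (hol_ub hh x y) _.
have dxy_lt : mdist x y `^ a < e / (h + 1).
  by rewrite -ra gt0_ltr_powR // nnegrE ?mdist_ge0 ?ltW.
apply: le_lt_trans (ler_wpM2l h_ge0 (ltW dxy_lt)) _.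
by rewrite mulrCA gtr_pMr // ltr_pdivrMr ?mul1r ?ltrDl // ltr_wpDl.
Qed.

Lemma W1_ge0 (mu nu : set (borelT T) -> \bar R) : (0 <= W1 mu nu)%E.
Proof.
apply: le_ereal_inf_tmp => _ [P _ <-].
by apply: integral_ge0 => z _; rewrite lee_fin mdist_ge0.
Qed.

End metric.

Definition empirical_mean {R : realType} (T : Type) (N : nat) (X : 'I_N -> T)
    (f : T -> R) : R :=
  N%:R^-1 * \sum_(i < N) f (X i).

Section tagged_partition.
Context {R : realType} (T : completeMetricType R) (nu : probability (borelT T) R)
  (C : R) (N : nat) (A : 'I_N -> set T) (X : 'I_N -> T).
Hypothesis AX : tagged_partition nu C A X.

Lemma measurable_cell i : @measurable _ (borelT T) (A i).
Proof. by case: AX. Qed.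

Lemma cell_uniq i j x : A i x -> A j x -> i = j.
Proof.
case: AX => _ [disjA _] Aix Ajx; apply: contrapT => ij.
by have := disjA _ _ ij; rewrite -subset0; apply; split; [exact: Aix|exact: Ajx].
Qed.

Lemma cell_cover x : exists i, A i x.
Proof. by case: AX => _ [_ []]. Qed.

Lemma nu_cell i : nu (A i) = (N%:R^-1)%:E.
Proof. by case: AX => _ [_ [_ []]]. Qed.

Lemma mdist_cell_le i y z : A i y -> A i z -> mdist y z <= C / N%:R.
Proof. by case: AX => _ [_ [_ [_ [diamA _]]]]; apply: diamA. Qed.

Lemma cell_tag i : A i (X i).
Proof. by case: AX => _ [_ [_ [_ []]]]. Qed.

Definition step (c : 'I_N -> R) (x : T) : R := \sum_(i < N) c i * \1_(A i) x.

Lemma stepE c i x : A i x -> step c x = c i.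
Proof.
move=> Aix; rewrite /step (bigD1 i) //= indicE mem_set // mulr1.
rewrite big1 ?addr0 // => j /eqP ji; rewrite indicE memNset ?mulr0 // => Ajx.
exact/ji/(cell_uniq Ajx Aix).
Qed.

Lemma measurable_step c : @measurable_fun _ _ (borelT T) R setT (step c).
Proof.
apply: measurable_sum => i; apply: measurable_funM => //.
exact: measurable_indic (measurable_cell i).
Qed.

Let step_sum_indic c :
  (fun x => (step c x)%:E) = (fun x => \sum_(i < N) (c i)%:E * (\1_(A i) x)%:E)%E.
Proof.
by apply/funext => x; rewrite /step -sumEFin; apply: eq_bigr => i _; rewrite EFinM.
Qed.

Lemma integrable_step c : nu.-integrable setT (EFin \o step c).
Proof.
rewrite /comp step_sum_indic; apply: integrable_sum => // i _.
by apply: integrableZl => //; exact: integrable_indic (measurable_cell i).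
Qed.

Lemma integral_step c :
  (\int[nu]_x (step c x)%:E = (N%:R^-1 * \sum_(i < N) c i)%:E)%E.
Proof.
rewrite step_sum_indic integral_sum //; last first.
  by move=> i; apply: integrableZl => //; exact: integrable_indic (measurable_cell i).
rewrite mulr_sumr -sumEFin; apply: eq_bigr => i _.
rewrite integralZl //; last exact: integrable_indic (measurable_cell i).
rewrite integral_indic ?setIT //; last exact: measurable_cell.
by rewrite EFinM muleC; congr (_ * _)%E; exact: nu_cell.
Qed.

Lemma empirical_mean_error_le (f : T -> R) (K : R) :
  nu.-integrable setT (EFin \o f) ->
  (forall i x, A i x -> `|f x - f (X i)| <= K) ->
  `|\int[nu]_x f x - empirical_mean X f| <= K.
Proof.
move=> intf oscK; pose fX := step (f \o X).
have intfX := integrable_step (f \o X).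
have -> : empirical_mean X f = \int[nu]_x fX x by rewrite /Rintegral integral_step.
have intd : nu.-integrable setT (EFin \o (fun x => f x - fX x)).
  rewrite (_ : _ \o _ = fun x => (EFin \o f) x - (EFin \o fX) x)%E //.
  exact: integrableB.
rewrite -RintegralB //; apply: le_trans (le_normr_Rintegral _ intd) _ => //.
apply: le_trans (@le_Rintegral _ _ _ nu setT _ (cst K) _ _ _ _) _ => //.
- rewrite (_ : _ \o _ = abse \o (EFin \o (fun x => f x - fX x))) //.
  exact: integrable_abse.
- exact: finite_measure_integrable_cst.
- by move=> x _; have [i Aix] := cell_cover x; rewrite /fX (stepE _ Aix); apply: oscK.
rewrite Rintegral_cst // [fine _](_ : _ = 1) ?mulr1 // (_ : _ setT = 1%E) //.
exact: probability_setT.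
Qed.

Definition tag (x : T) : T := if [pick i | `[< A i x >]] is Some i then X i else x.

Lemma tagE i x : A i x -> tag x = X i.
Proof.
move=> Aix; rewrite /tag; case: pickP => [j /asboolP Ajx|/(_ i)].
  by rewrite (cell_uniq Ajx Aix).
by move/asboolP: Aix => ->.
Qed.

Let tag_in (B : set T) (i : 'I_N) : R := (X i \in B)%:R.

Let preimage_tag (B : set T) : tag @^-1` B = step (tag_in B) @^-1` [set 1].
Proof.
apply/seteqP; split => x /=; have [i Aix] := cell_cover x;
  rewrite (stepE _ Aix) (tagE Aix) /tag_in.
  by move=> Bx; rewrite mem_set.
by case: (boolP (X i \in B)) => [/set_mem //|_ /eqP]; rewrite eq_sym oner_eq0.
Qed.

Lemma measurable_preimage_tag (B : set T) : @measurable _ (borelT T) (tag @^-1` B).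
Proof. by rewrite preimage_tag -[X in measurable X]setTI; exact: measurable_step. Qed.

Lemma measurable_tag : @measurable_fun _ _ (borelT T) (borelT T) setT tag.
Proof. by move=> _ B _; rewrite setTI; exact: measurable_preimage_tag. Qed.

Lemma nu_preimage_tag (B : set T) : nu (tag @^-1` B) = empirical X B.
Proof.
transitivity (\int[nu]_x (step (tag_in B) x)%:E)%E.
  transitivity (\int[nu]_x (\1_(tag @^-1` B) x)%:E)%E.
    by rewrite integral_indic ?setIT //; exact: measurable_preimage_tag.
  apply: eq_integral => x _; congr _%:E.
  have [i Aix] := cell_cover x; rewrite (stepE _ Aix) indicE /tag_in.
  by rewrite (_ : (x \in _) = (tag x \in B)) // (tagE Aix).
by rewrite integral_step EFinM -sumEFin /empirical.
Qed.

Definition tag_graph : set (borelT T * borelT T)%type :=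
  \bigcup_i ([set X i] `*` A i).

Lemma measurable_tag_graph : measurable tag_graph.
Proof.
apply: countable_bigcupT_measurable => // i; apply: measurableX.
  exact: measurable_borel_set1.
exact: measurable_cell.
Qed.

Let tag_pair (x : borelT T) : (borelT T * borelT T)%type := (tag x, x).

Let measurable_tag_pair : measurable_fun setT tag_pair.
Proof. exact: measurable_fun_pair measurable_tag _. Qed.

HB.instance Definition _ := isMeasurableFun.Build _ _ _ _ tag_pair measurable_tag_pair.

Definition tag_coupling := distribution nu tag_pair.

Lemma coupling_tag_coupling : coupling (empirical X) nu tag_coupling.
Proof.
move=> B mB; split.
- rewrite -nu_preimage_tag; congr (nu _).
  by apply/seteqP; split => x /=; [case|].
- by congr (nu _); apply/seteqP; split => x /=; [case|].
Qed.

Lemma tag_coupling_cost_le :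
  (\int[tag_coupling]_z (mdist z.1 z.2)%:E <= (C / N%:R)%:E)%E.
Proof.
apply: (ge0_integral_le_ae measurable_tag_graph).
- transitivity (nu (tag_pair @^-1` (~` tag_graph))); first by [].
  rewrite (_ : _ @^-1` _ = set0) ?measure0 //; apply/seteqP; split => x //=.
  have [i Aix] := cell_cover x.
  by apply; exists i => //; split => //=; rewrite (tagE Aix).
- by move=> z; rewrite lee_fin mdist_ge0.
- move=> z [i _ [/= -> Az2]]; rewrite lee_fin.
  exact: mdist_cell_le (cell_tag i) Az2.
Qed.

Lemma W1_empirical_le : (W1 (empirical X) nu <= (C / N%:R)%:E)%E.
Proof.
apply: ge_ereal_inf; exists (\int[tag_coupling]_z (mdist z.1 z.2)%:E)%E.
  by exists tag_coupling => //; exact: coupling_tag_coupling.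
exact: tag_coupling_cost_le.
Qed.

End tagged_partition.

Lemma cvg_divr_natS {R : realType} (c : R) :
  (fun n : nat => c / n.+1%:R) @ \oo --> 0.
Proof. by rewrite -(mulr0 c); apply: cvgMr; exact: cvg_harmonic. Qed.

Lemma powR_div {R : realType} (x y a : R) : 0 <= x -> 0 <= y ->
  (x / y) `^ a = x `^ a / y `^ a.
Proof.
move=> x_ge0 y_ge0; rewrite powRM ?invr_ge0 //; congr (_ * _).
by rewrite -powR_inv1 // -powRAC powR_inv1 // powR_ge0.
Qed.

Lemma mdist_le_tagged_partition1 {R : realType} (T : completeMetricType R)
    (nu : probability (borelT T) R) (C : R) (A : 'I_1 -> set T) (X : 'I_1 -> T) :
  tagged_partition nu C A X -> forall y z : T, mdist y z <= C.
Proof.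
move=> AX y z; have [i Ay] := cell_cover AX y; have [j Az] := cell_cover AX z.
by rewrite -(divr1 C) (mdist_cell_le AX Ay) // (ord1 i) -(ord1 j).
Qed.

Section tagged_partitions.
Context {R : realType} (T : completeMetricType R) (nu : probability (borelT T) R)
  (C : R) (A : forall N : nat, 'I_N -> set T) (X : forall N : nat, 'I_N -> T).
Arguments A : clear implicits.
Arguments X : clear implicits.
Hypothesis AX : forall N : nat, (0 < N)%N -> tagged_partition nu C (A N) (X N).

Definition step_approx (f : T -> R) (n : nat) : T -> R :=
  step (A n.+1) (f \o X n.+1).

Let step_approxE f n x : exists i,
  step_approx f n x = f (X n.+1 i) /\ mdist x (X n.+1 i) <= C / n.+1%:R.
Proof.
have AXn := AX (ltn0Sn n); have [i Aix] := cell_cover AXn x.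
exists i; split; first by rewrite /step_approx (stepE AXn _ Aix).
exact: (mdist_cell_le AXn Aix (cell_tag AXn i)).
Qed.

Lemma cvg_step_approx f x :
  continuous_at_pt f x -> step_approx f n x @[n --> \oo] --> f x.
Proof.
move=> fx; apply/cvgrPdist_lt => e e_gt0.
have [r /= r_gt0 fxr] :=
  (metricType_numDomainType.nbhs_mdistP x _).1 ((cvgrPdist_lt _ _).1 fx e e_gt0).
near=> n; have [i [-> dxi]] := step_approxE f n x; apply: fxr => /=.
by apply: le_lt_trans dxi _; near: n; apply: cvgr_lt (cvg_divr_natS C) _ _.
Unshelve. all: end_near. Qed.

Lemma cvg_empirical_mean (f : T -> R) (M : R) :
  @measurable_fun _ _ (borelT T) R setT f -> (forall x, `|f x| <= M) ->
  {ae nu, forall x : borelT T, continuous_at_pt f x} ->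
  empirical_mean (X N) f @[N --> \oo] --> \int[nu]_x f x.
Proof.
move=> mf fM fae; rewrite -cvg_shiftS /=.
have intf := bounded_integrable nu mf fM.
have mstep n : @measurable_fun _ _ (borelT T) _ setT (EFin \o step_approx f n).
  by apply/measurable_EFinP; exact: measurable_step (AX (ltn0Sn n)) _.
have cvg_ae : \forall x \ae nu,
    setT x -> (EFin \o step_approx f n) x @[n --> \oo] --> (f x)%:E.
  case: fae => D [mD D0 fD]; exists D; split => // x /= Dx.
  apply: fD => /= fx; apply: Dx => _.
  by apply: cvg_EFin; [exact: nearW|exact: cvg_step_approx].
have step_le : \forall x \ae nu,
    forall n, setT x -> (`|(EFin \o step_approx f n) x| <= (cst M%:E) x)%E.
  by apply: aeW => x n _ /=; have [i [-> _]] := step_approxE f n x; rewrite lee_fin.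
have [_ _] := dominated_convergence measurableT mstep ((measurable_EFinP _ _).2 mf)
  cvg_ae (finite_measure_integrable_cst nu M measurableT) step_le.
under eq_fun do rewrite (integral_step (AX (ltn0Sn _))).
by rewrite -(fineK (integrable_fin_num measurableT intf)) => /fine_cvgP[].
Qed.

Lemma empirical_mean_hol_error (a : R) (N : nat) (f : T -> R) :
  0 < a -> (0 < N)%N -> (hol a f < +oo)%E ->
  (`|\int[nu]_x f x - empirical_mean (X N) f|%:E
    <= (C `^ a / N%:R `^ a)%:E * hol a f)%E.
Proof.
move=> a_gt0 N_gt0 holf_fin.
have [h holf] : exists h, hol a f = h%:E.
  by exists (fine (hol a f)); rewrite fineK // ge0_fin_numE // hol_ge0.
have h_ge0 : 0 <= h by rewrite -lee_fin -holf hol_ge0.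
have diam_le := mdist_le_tagged_partition1 (AX (ltn0Sn 0)).
have C_ge0 : 0 <= C := le_trans (mdist_ge0 _ _) (diam_le (X 1 ord0) (X 1 ord0)).
have hol_le y z c : mdist y z <= c -> `|f y - f z| <= h * c `^ a.
  move=> yz_le; apply: le_trans (hol_ub holf y z) _; apply: ler_wpM2l => //.
  have c_ge0 := le_trans (mdist_ge0 y z) yz_le.
  by apply: (ge0_ler_powR (ltW a_gt0)) yz_le; rewrite nnegrE ?mdist_ge0.
have f_le x : `|f x| <= `|f (X 1 ord0)| + h * C `^ a.
  rewrite -[f x](subrK (f (X 1 ord0))) (le_trans (ler_normD _ _)) // addrC lerD2l.
  exact: hol_le.
have mf := continuous_borel_measurable (hol_continuous a_gt0 holf).
have := empirical_mean_error_le (AX N_gt0) (bounded_integrable nu mf f_le)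
  (fun i x Aix => hol_le _ _ _ (mdist_cell_le (AX N_gt0) Aix (cell_tag (AX N_gt0) i))).
by rewrite holf -EFinM lee_fin powR_div // ?divr_ge0 // mulrC.
Qed.

Lemma cvg_W1_empirical : W1 (empirical (X N)) nu @[N --> \oo] --> 0%E.
Proof.
rewrite -cvg_shiftS.
have W1_near : \forall n \near \oo,
    (cst 0%E n <= W1 (empirical (X n.+1)) nu <= (fun n => (C / n.+1%:R)%:E) n)%E.
  by apply: nearW => n; rewrite W1_ge0; exact: W1_empirical_le (AX (ltn0Sn n)).
apply: (squeeze_cvge W1_near (cvg_cst _)).
by apply: cvg_EFin; [exact: nearW|exact: cvg_divr_natS].
Qed.

End tagged_partitions.

Theorem lemma16 (R : realType) (T : completeMetricType R)
  (lambda : {measure set (borelT T) -> \bar R})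
  (nu : probability (borelT T) R) (nu_ac : nu `<< lambda)
  (C : R) (C_gt0 : 0 < C)
  (A : forall N : nat, 'I_N -> set T) (X : forall N : nat, 'I_N -> T)
  (HAX : forall N : nat, (0 < N)%N -> tagged_partition nu C (A N) (X N)) :
  (* (1) *)
  ((forall f : T -> R,
      measurable_fun (setT : set (borelT T)) f ->
      compact_support f ->
      (exists M : R, forall x, `|f x| <= M) ->
      {ae nu, forall x : borelT T, continuous_at_pt f x} ->
      (fun N : nat => \int[nu]_x f x - N%:R^-1 * \sum_(i < N) f (X N i))
        @ \oo --> (0 : R))
   /\ (* weak convergence of nu^E_X to nu *)
   (forall f : T -> R, continuous f -> (exists M : R, forall x, `|f x| <= M) ->
      (fun N : nat => N%:R^-1 * \sum_(i < N) f (X N i))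
        @ \oo --> \int[nu]_x f x)
   /\ (* W1 convergence when Omega has compact closure *)
   (compact [set: T] ->
      (fun N : nat => W1 (empirical (X N)) nu) @ \oo --> (0 : \bar R)%E))
  /\
  (* (2) *)
  ((forall (a : R), 0 < a <= 1 -> forall N : nat, (0 < N)%N ->
     forall f : T -> R, compact_support f -> (hol a f < +oo)%E ->
     (`| \int[nu]_x f x - N%:R^-1 * \sum_(i < N) f (X N i) |%:E
        <= (C `^ a / N%:R `^ a)%:E * hol a f)%E)
   /\
   (forall N : nat, (0 < N)%N -> (W1 (empirical (X N)) nu <= (C / N%:R)%:E)%E)).
Proof.
split; [split; [|split]|split].
- move=> f mf _ [M fM] fae.
  have := cvgB (cvg_cst (\int[nu]_x f x)) (cvg_empirical_mean HAX mf fM fae).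
  by rewrite subrr; apply.
- move=> f cf [M fM].
  by have := cvg_empirical_mean HAX (continuous_borel_measurable cf) fM
    (aeW nu (fun x : borelT T => cf x)); apply.
- by move=> _; exact: cvg_W1_empirical HAX.
- move=> a /andP[a_gt0 _] N N_gt0 f _.
  exact: (empirical_mean_hol_error HAX a_gt0 N_gt0).
- by move=> N N_gt0; exact: W1_empirical_le (HAX N N_gt0).
Qed.
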